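(* Let $u(x,y)$, $v(x,y)$ be two conjugate harmonic functions on an open set $\Omega\subset\mathbb{R}^2$, i.e. $u_x=v_y$ and $u_y=-v_x$ on $\Omega$. Let $\psi(x,y)$ be a (sufficiently smooth) real function on $\Omega$ satisfying $$(v\,\psi_x)_x+(v\,\psi_y)_y=0 .$$ Define $$f_2=-\psi_y,\quad g_2=\psi_x,\quad f_1=-\psi_y u-\psi_x v,\quad g_1=\psi_x u-\psi_y v,\quad \Lambda=\psi_x^2+\psi_y^2 .$$ Then the geodesic flow of the metric $ds^2=\Lambda(x,y)(dx^2+dy^2)$ admits the rational first integral $$F=\frac{f_1(x,y)p_1+g_1(x,y)p_2}{f_2(x,y)p_1+g_2(x,y)p_2}.$$
   Context: For a metric $ds^2=\Lambda(x,y)(dx^2+dy^2)$ in coordinates $(x,y)$ with momenta $(p_1,p_2)$, the geodesic flow is the Hamiltonian system with Hamiltonian $H=\frac{p_1^2+p_2^2}{2\Lambda}$ and canonical Poisson bracket $\{F,H\}=\sum_{i=1}^2\left(\frac{\partial F}{\partial x^i}\frac{\partial H}{\partial p_i}-\frac{\partial F}{\partial p_i}\frac{\partial H}{\partial x^i}\right)$ with $x^1=x$, $x^2=y$. A function $F(x,y,p_1,p_2)$ is a first integral if $\{F,H\}\equiv 0$ (wherever $F$ and $H$ are defined). *)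

From Stdlib Require Import Reals.
From Coquelicot Require Import Coquelicot.
Open Scope R_scope.

Definition pdx (f : R -> R -> R) (x y : R) : R := Derive (fun t => f t y) x.
Definition pdy (f : R -> R -> R) (x y : R) : R := Derive (fun t => f x t) y.

Definition cont2 (f : R -> R -> R) (x y : R) : Prop :=
  continuous (fun z : R * R => f (fst z) (snd z)) (x, y).

Definition C1_on (Omega : R * R -> Prop) (f : R -> R -> R) : Prop :=
  forall x y, Omega (x, y) ->
    cont2 f x y /\
    ex_derive (fun t => f t y) x /\ ex_derive (fun t => f x t) y /\
    cont2 (pdx f) x y /\ cont2 (pdy f) x y.

Definition C2_on (Omega : R * R -> Prop) (f : R -> R -> R) : Prop :=
  C1_on Omega f /\ C1_on Omega (pdx f) /\ C1_on Omega (pdy f).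

Definition d_x  (F : R -> R -> R -> R -> R) x y p1 p2 := Derive (fun t => F t y p1 p2) x.
Definition d_y  (F : R -> R -> R -> R -> R) x y p1 p2 := Derive (fun t => F x t p1 p2) y.
Definition d_p1 (F : R -> R -> R -> R -> R) x y p1 p2 := Derive (fun t => F x y t p2) p1.
Definition d_p2 (F : R -> R -> R -> R -> R) x y p1 p2 := Derive (fun t => F x y p1 t) p2.

Definition poisson_bracket (F H : R -> R -> R -> R -> R) x y p1 p2 : R :=
  d_x F x y p1 p2 * d_p1 H x y p1 p2 + d_y F x y p1 p2 * d_p2 H x y p1 p2
  - d_p1 F x y p1 p2 * d_x H x y p1 p2 - d_p2 F x y p1 p2 * d_y H x y p1 p2.

(* Hamiltonian of the geodesic flow of ds^2 = Lambda (dx^2 + dy^2). *)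
Definition geodesic_H (Lam : R -> R -> R) : R -> R -> R -> R -> R :=
  fun x y p1 p2 => (p1 ^ 2 + p2 ^ 2) / (2 * Lam x y).

(* Write a = psi_x, b = psi_y, D = -b p1 + a p2 and Lam = a^2 + b^2.  Where D <> 0
   the integral is F = u - v (a p1 + b p2) / D, and for H = |p|^2 / (2 Lam) one has
   {F, H} = (p . grad_x F) / Lam + |p|^2 (grad Lam . grad_p F) / (2 Lam^2).
   After the Cauchy-Riemann equations for (u, v) and the symmetry psi_xy = psi_yx,
   all terms collapse to  -|p|^2 / (Lam D) * ((v psi_x)_x + (v psi_y)_y),
   which vanishes by the hypothesis on psi. *)

From Stdlib Require Import Reals Lra.
From Coquelicot Require Import Coquelicot.
Open Scope R_scope.

Lemma is_derive_pdx_of_C1_on (Omega : R * R -> Prop) (f : R -> R -> R) (x y : R) :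
  C1_on Omega f -> Omega (x, y) -> is_derive (fun t => f t y) x (pdx f x y).
Proof. intros Hf Hxy; apply Derive_correct, (Hf x y Hxy). Qed.

Lemma is_derive_pdy_of_C1_on (Omega : R * R -> Prop) (f : R -> R -> R) (x y : R) :
  C1_on Omega f -> Omega (x, y) -> is_derive (fun t => f x t) y (pdy f x y).
Proof. intros Hf Hxy; apply Derive_correct, (Hf x y Hxy). Qed.

Lemma pdx_mult (f g : R -> R -> R) (x y : R) :
  ex_derive (fun t => f t y) x -> ex_derive (fun t => g t y) x ->
  pdx (fun a b => f a b * g a b) x y = pdx f x y * g x y + f x y * pdx g x y.
Proof. apply Derive_mult. Qed.

Lemma pdy_mult (f g : R -> R -> R) (x y : R) :
  ex_derive (fun t => f x t) y -> ex_derive (fun t => g x t) y ->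
  pdy (fun a b => f a b * g a b) x y = pdy f x y * g x y + f x y * pdy g x y.
Proof. apply Derive_mult. Qed.

Lemma pdx_pdy_C2_on (Omega : R * R -> Prop) (f : R -> R -> R) (x y : R) :
  open Omega -> C2_on Omega f -> Omega (x, y) ->
  pdx (pdy f) x y = pdy (pdx f) x y.
Proof.
  intros HO [Hf [Hfx Hfy]] Hxy.
  apply Schwarz.
  - apply locally_2d_locally.
    apply (filter_imp Omega); [|now apply HO].
    intros [s t] Hst.
    destruct (Hf s t Hst) as [_ [? [? _]]].
    destruct (Hfx s t Hst) as [_ [_ [? _]]].
    destruct (Hfy s t Hst) as [_ [? _]].
    now repeat split.
  - apply continuity_2d_pt_filterlim, (Hfy x y Hxy).
  - apply continuity_2d_pt_filterlim, (Hfx x y Hxy).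
Qed.

Lemma is_derive_sq_sum (A B : R -> R) (t dA dB : R) :
  is_derive A t dA -> is_derive B t dB ->
  is_derive (fun s => A s ^ 2 + B s ^ 2) t (2 * (A t * dA + B t * dB)).
Proof.
  intros HA HB; auto_derive.
  - repeat split; eexists; eassumption.
  - rewrite (is_derive_unique (fun s : R => A s) t dA HA),
      (is_derive_unique (fun s : R => B s) t dB HB).
    ring.
Qed.

Lemma Derive_div_double (c : R) (L : R -> R) (t l : R) :
  is_derive L t l -> L t <> 0 ->
  Derive (fun s => c / (2 * L s)) t = - c * l / (2 * L t ^ 2).
Proof.
  intros HL HL0.
  apply is_derive_unique; auto_derive.
  - split; [eexists; exact HL | lra].
  - rewrite (is_derive_unique (fun s : R => L s) t l HL). field; exact HL0.
Qed.

Lemma d_p1_geodesic_H (Lam : R -> R -> R) (x y p1 p2 : R) :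
  Lam x y <> 0 -> d_p1 (geodesic_H Lam) x y p1 p2 = p1 / Lam x y.
Proof.
  intros HL; apply is_derive_unique; unfold geodesic_H; auto_derive; [lra | field; exact HL].
Qed.

Lemma d_p2_geodesic_H (Lam : R -> R -> R) (x y p1 p2 : R) :
  Lam x y <> 0 -> d_p2 (geodesic_H Lam) x y p1 p2 = p2 / Lam x y.
Proof.
  intros HL; apply is_derive_unique; unfold geodesic_H; auto_derive; [lra | field; exact HL].
Qed.

Lemma poisson_bracket_geodesic_H (F : R -> R -> R -> R -> R) (Lam : R -> R -> R)
    (x y p1 p2 Lx Ly : R) :
  is_derive (fun t => Lam t y) x Lx -> is_derive (fun t => Lam x t) y Ly -> Lam x y <> 0 ->
  poisson_bracket F (geodesic_H Lam) x y p1 p2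
  = (p1 * d_x F x y p1 p2 + p2 * d_y F x y p1 p2) / Lam x y
    + (p1 ^ 2 + p2 ^ 2) * (Lx * d_p1 F x y p1 p2 + Ly * d_p2 F x y p1 p2) / (2 * Lam x y ^ 2).
Proof.
  intros HLx HLy HL.
  unfold poisson_bracket.
  rewrite d_p1_geodesic_H, d_p2_geodesic_H by exact HL.
  unfold d_x at 2, d_y at 2, geodesic_H.
  rewrite (Derive_div_double _ _ _ _ HLx HL), (Derive_div_double _ _ _ _ HLy HL).
  field; exact HL.
Qed.

Definition ratio_integral (a b u v : R -> R -> R) (x y p1 p2 : R) : R :=
  ((- b x y * u x y - a x y * v x y) * p1 + (a x y * u x y - b x y * v x y) * p2)
  / (- b x y * p1 + a x y * p2).

Lemma Derive_ratio_integral_line (A B U V : R -> R) (t p1 p2 dA dB dU dV : R) :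
  is_derive A t dA -> is_derive B t dB -> is_derive U t dU -> is_derive V t dV ->
  - B t * p1 + A t * p2 <> 0 ->
  Derive (fun s => ((- B s * U s - A s * V s) * p1 + (A s * U s - B s * V s) * p2)
                   / (- B s * p1 + A s * p2)) t
  = dU - dV * (A t * p1 + B t * p2) / (- B t * p1 + A t * p2)
    - V t * (A t * dB - dA * B t) * (p1 ^ 2 + p2 ^ 2) / (- B t * p1 + A t * p2) ^ 2.
Proof.
  intros HA HB HU HV HD.
  apply is_derive_unique; auto_derive.
  - repeat split; try eexists; eassumption.
  - rewrite (is_derive_unique (fun s : R => A s) t dA HA),
      (is_derive_unique (fun s : R => B s) t dB HB),
      (is_derive_unique (fun s : R => U s) t dU HU),
      (is_derive_unique (fun s : R => V s) t dV HV).
    field; exact HD.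
Qed.

Lemma d_x_ratio_integral (a b u v : R -> R -> R) (x y p1 p2 ax bx ux vx : R) :
  is_derive (fun t => a t y) x ax -> is_derive (fun t => b t y) x bx ->
  is_derive (fun t => u t y) x ux -> is_derive (fun t => v t y) x vx ->
  - b x y * p1 + a x y * p2 <> 0 ->
  d_x (ratio_integral a b u v) x y p1 p2
  = ux - vx * (a x y * p1 + b x y * p2) / (- b x y * p1 + a x y * p2)
    - v x y * (a x y * bx - ax * b x y) * (p1 ^ 2 + p2 ^ 2) / (- b x y * p1 + a x y * p2) ^ 2.
Proof.
  exact (Derive_ratio_integral_line
           (fun t => a t y) (fun t => b t y) (fun t => u t y) (fun t => v t y) x p1 p2 ax bx ux vx).
Qed.

Lemma d_y_ratio_integral (a b u v : R -> R -> R) (x y p1 p2 ay by' uy vy : R) :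
  is_derive (fun t => a x t) y ay -> is_derive (fun t => b x t) y by' ->
  is_derive (fun t => u x t) y uy -> is_derive (fun t => v x t) y vy ->
  - b x y * p1 + a x y * p2 <> 0 ->
  d_y (ratio_integral a b u v) x y p1 p2
  = uy - vy * (a x y * p1 + b x y * p2) / (- b x y * p1 + a x y * p2)
    - v x y * (a x y * by' - ay * b x y) * (p1 ^ 2 + p2 ^ 2) / (- b x y * p1 + a x y * p2) ^ 2.
Proof.
  exact (Derive_ratio_integral_line
           (fun t => a x t) (fun t => b x t) (fun t => u x t) (fun t => v x t) y p1 p2 ay by' uy vy).
Qed.

Lemma d_p1_ratio_integral (a b u v : R -> R -> R) (x y p1 p2 : R) :
  - b x y * p1 + a x y * p2 <> 0 ->
  d_p1 (ratio_integral a b u v) x y p1 p2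
  = - v x y * (a x y ^ 2 + b x y ^ 2) * p2 / (- b x y * p1 + a x y * p2) ^ 2.
Proof.
  intros HD; apply is_derive_unique; unfold ratio_integral; auto_derive; [exact HD | field; exact HD].
Qed.

Lemma d_p2_ratio_integral (a b u v : R -> R -> R) (x y p1 p2 : R) :
  - b x y * p1 + a x y * p2 <> 0 ->
  d_p2 (ratio_integral a b u v) x y p1 p2
  = v x y * (a x y ^ 2 + b x y ^ 2) * p1 / (- b x y * p1 + a x y * p2) ^ 2.
Proof.
  intros HD; apply is_derive_unique; unfold ratio_integral; auto_derive; [exact HD | field; exact HD].
Qed.

Theorem theorem1 (Omega : R * R -> Prop) (u v psi : R -> R -> R) :
  open Omega ->
  C1_on Omega u -> C1_on Omega v -> C2_on Omega psi ->
  (forall x y, Omega (x, y) ->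
     pdx u x y = pdy v x y /\ pdy u x y = - pdx v x y) ->
  (forall x y, Omega (x, y) ->
     pdx (fun a b => v a b * pdx psi a b) x y
     + pdy (fun a b => v a b * pdy psi a b) x y = 0) ->
  let f2 := fun x y => - pdy psi x y in
  let g2 := fun x y => pdx psi x y in
  let f1 := fun x y => - pdy psi x y * u x y - pdx psi x y * v x y in
  let g1 := fun x y => pdx psi x y * u x y - pdy psi x y * v x y in
  let Lam := fun x y => pdx psi x y ^ 2 + pdy psi x y ^ 2 in
  let F := fun x y p1 p2 =>
             (f1 x y * p1 + g1 x y * p2) / (f2 x y * p1 + g2 x y * p2) in
  forall x y p1 p2, Omega (x, y) ->
    Lam x y <> 0 ->
    f2 x y * p1 + g2 x y * p2 <> 0 ->
    poisson_bracket F (geodesic_H Lam) x y p1 p2 = 0.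
Proof.
  intros HO Hu Hv Hpsi Hcr Hdiv f2 g2 f1 g1 Lam F x y p1 p2 Hxy HL HD.
  change (poisson_bracket (ratio_integral (pdx psi) (pdy psi) u v) (geodesic_H Lam) x y p1 p2 = 0).
  change (- pdy psi x y * p1 + pdx psi x y * p2 <> 0) in HD.
  pose proof Hpsi as [_ [Hpsix Hpsiy]].
  pose proof (is_derive_pdx_of_C1_on _ _ _ _ Hpsix Hxy) as Hax.
  pose proof (is_derive_pdy_of_C1_on _ _ _ _ Hpsix Hxy) as Hay.
  pose proof (is_derive_pdx_of_C1_on _ _ _ _ Hpsiy Hxy) as Hbx.
  pose proof (is_derive_pdy_of_C1_on _ _ _ _ Hpsiy Hxy) as Hby.
  pose proof (is_derive_pdx_of_C1_on _ _ _ _ Hu Hxy) as Hux.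
  pose proof (is_derive_pdy_of_C1_on _ _ _ _ Hu Hxy) as Huy.
  pose proof (is_derive_pdx_of_C1_on _ _ _ _ Hv Hxy) as Hvx.
  pose proof (is_derive_pdy_of_C1_on _ _ _ _ Hv Hxy) as Hvy.
  rewrite (poisson_bracket_geodesic_H _ _ _ _ _ _ _ _
             (is_derive_sq_sum _ _ _ _ _ Hax Hbx) (is_derive_sq_sum _ _ _ _ _ Hay Hby) HL).
  rewrite (d_x_ratio_integral _ _ _ _ _ _ _ _ _ _ _ _ Hax Hbx Hux Hvx HD),
    (d_y_ratio_integral _ _ _ _ _ _ _ _ _ _ _ _ Hay Hby Huy Hvy HD),
    d_p1_ratio_integral, d_p2_ratio_integral by exact HD.
  destruct (Hcr x y Hxy) as [-> ->].
  rewrite (pdx_pdy_C2_on Omega psi x y HO Hpsi Hxy).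
  pose proof (Hdiv x y Hxy) as Hdiv_xy.
  rewrite pdx_mult, pdy_mult in Hdiv_xy by (eexists; eassumption).
  transitivity (- (p1 ^ 2 + p2 ^ 2) / (Lam x y * (- pdy psi x y * p1 + pdx psi x y * p2))
                * (pdx v x y * pdx psi x y + v x y * pdx (pdx psi) x y
                   + (pdy v x y * pdy psi x y + v x y * pdy (pdy psi) x y))).
  - unfold Lam in HL |- *; field; split; assumption.
  - rewrite Hdiv_xy; ring.
Qed.
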